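(* Let $(X,d)$ be a locally compact metric space with a flow $\pi$ and let $M\subseteq X$. For $\varepsilon,t>0$ put $A_{\varepsilon,t}=\overline{P_t(M,\varepsilon)\cdot[t,\infty)}$. Then $$\bigcap_{\varepsilon>0,\,t>0}P_t(M,\varepsilon)=\bigcap_{\varepsilon>0,\,t>0}A_{\varepsilon,t}.$$
   Context: A flow is a continuous map $\pi: X\times\mathbb{R}\to X$ with $\pi(x,0)=x$ and $\pi(\pi(x,t),s)=\pi(x,t+s)$; write $x\cdot t=\pi(x,t)$ and $Y\cdot T=\{y\cdot s: y\in Y, s\in T\}$. For $x,y\in X$ and $\varepsilon,t>0$, an $(\varepsilon,t)$-chain from $x$ to $y$ is a pair of finite sequences $x=x_1,\dots,x_{n+1}=y$ in $X$ and $t_1,\dots,t_n$ in $\mathbb{R}^+$ with $t_i\ge t$ and $d(x_i\cdot t_i,x_{i+1})\le\varepsilon$ for all $i$. $P_t(M,\varepsilon)$ is the set of $y\in X$ such that there is an $(\varepsilon,t)$-chain from $x$ to $y$ for some $x\in M$. *)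

From Stdlib Require Import Reals List.
Open Scope R_scope.

Section MetricDefs.
Variable X : Type.
Variable d : X -> X -> R.

Definition is_metric : Prop :=
  (forall x y, 0 <= d x y) /\ (forall x y, d x y = 0 <-> x = y) /\
  (forall x y, d x y = d y x) /\ (forall x y z, d x z <= d x y + d y z).

Definition mopen (U : X -> Prop) : Prop :=
  forall x, U x -> exists r, 0 < r /\ forall y, d x y < r -> U y.

Definition mcompact (K : X -> Prop) : Prop :=
  forall (I : Type) (U : I -> X -> Prop),
    (forall i, mopen (U i)) -> (forall x, K x -> exists i, U i x) ->
    exists l : list I, forall x, K x -> exists i, In i l /\ U i x.

Definition locally_compact : Prop :=
  forall x, exists K, mcompact K /\ exists r, 0 < r /\ forall y, d x y < r -> K y.

Definition mclosure (A : X -> Prop) (x : X) : Prop :=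
  forall e, 0 < e -> exists y, A y /\ d x y < e.

Definition is_flow (pi : X -> R -> X) : Prop :=
  (forall x, pi x 0 = x) /\
  (forall x t s, pi (pi x t) s = pi x (t + s)) /\
  (forall x t e, 0 < e -> exists delta, 0 < delta /\
     forall y s, d x y < delta -> Rabs (s - t) < delta -> d (pi x t) (pi y s) < e).

Definition chain (pi : X -> R -> X) (eps t : R) (x y : X) : Prop :=
  exists (n : nat) (xs : nat -> X) (ts : nat -> R),
    (1 <= n)%nat /\ xs 0%nat = x /\ xs n = y /\
    forall i, (i < n)%nat -> t <= ts i /\ d (pi (xs i) (ts i)) (xs (S i)) <= eps.

Definition Pt (pi : X -> R -> X) (t : R) (M : X -> Prop) (eps : R) (y : X) : Prop :=
  exists x, M x /\ chain pi eps t x y.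

Definition Aset (pi : X -> R -> X) (M : X -> Prop) (eps t : R) : X -> Prop :=
  mclosure (fun z => exists y s, Pt pi t M eps y /\ t <= s /\ z = pi y s).

End MetricDefs.

(* Every point of [P_t(M, ε) · [t, ∞)] is within ε of [P_t(M, ε)]: append one more
   step of length at least t to the chain.  Conversely a point y of [P_{2t}(M, ε)] is
   reached by a last step [x · s] with [s ≥ 2t]; cutting that step at time [s - t]
   gives a point y' of [P_t(M, ε)] with [y' · t] within ε of y.  Neither direction
   uses local compactness or continuity of the flow. *)
From Stdlib Require Import Reals Lra Lia Arith.
Open Scope R_scope.

Section Chains.
Variables (X : Type) (d : X -> X -> R) (pi : X -> R -> X).

Lemma chain_mono (eps eps' t t' : R) (x y : X) :
  eps <= eps' -> t' <= t -> chain X d pi eps t x y -> chain X d pi eps' t' x y.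
Proof.
  intros Heps Ht [n [xs [ts [Hn [Hx [Hy Hsteps]]]]]].
  exists n, xs, ts. do 3 (split; [assumption|]).
  intros i Hi. destruct (Hsteps i Hi). split; lra.
Qed.

(* The disjunct [z = x] stands for the chain of length zero, which [chain] excludes. *)
Lemma chain_extend (eps t s : R) (x z y : X) :
  (z = x \/ chain X d pi eps t x z) -> t <= s -> d (pi z s) y <= eps ->
  chain X d pi eps t x y.
Proof.
  intros [-> | [n [xs [ts [Hn [Hx [Hz Hsteps]]]]]]] Hts Hd.
  - exists 1%nat, (fun i => if Nat.eqb i 0 then x else y), (fun _ => s).
    do 3 (split; [reflexivity|]).
    intros i Hi. replace i with 0%nat by lia. simpl. split; lra.
  - exists (S n), (fun i => if Nat.leb i n then xs i else y),
      (fun i => if Nat.ltb i n then ts i else s).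
    split; [lia|]. split; [exact Hx|].
    split; [destruct (Nat.leb_spec (S n) n); [lia|reflexivity]|].
    intros i Hi. destruct (Nat.ltb_spec i n).
    + destruct (Nat.leb_spec i n); [|lia]. destruct (Nat.leb_spec (S i) n); [|lia].
      apply Hsteps; lia.
    + replace i with n by lia. rewrite Nat.leb_refl.
      destruct (Nat.leb_spec (S n) n); [lia|]. rewrite Hz. split; lra.
Qed.

Lemma chain_last_step (eps t : R) (x y : X) :
  chain X d pi eps t x y ->
  exists z s, (z = x \/ chain X d pi eps t x z) /\ t <= s /\ d (pi z s) y <= eps.
Proof.
  intros [n [xs [ts [Hn [Hx [Hy Hsteps]]]]]].
  destruct (Hsteps (n - 1)%nat ltac:(lia)) as [Hts Hd].
  replace (S (n - 1)) with n in Hd by lia. rewrite Hy in Hd.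
  exists (xs (n - 1)%nat), (ts (n - 1)%nat). split; [|split; assumption].
  destruct (Nat.eq_dec n 1) as [-> | Hn1]; [left; exact Hx|].
  right. exists (n - 1)%nat, xs, ts. split; [lia|]. split; [exact Hx|].
  split; [reflexivity|]. intros i Hi. apply Hsteps. lia.
Qed.

Lemma Pt_extend (M : X -> Prop) (eps t s : R) (z y : X) :
  Pt X d pi t M eps z -> t <= s -> d (pi z s) y <= eps -> Pt X d pi t M eps y.
Proof.
  intros [x [Mx Hxz]] Hts Hd. exists x. split; [exact Mx|].
  exact (chain_extend eps t s x z y (or_intror Hxz) Hts Hd).
Qed.

Lemma Pt_mono (M : X -> Prop) (eps eps' t t' : R) (y : X) :
  eps <= eps' -> t' <= t -> Pt X d pi t M eps y -> Pt X d pi t' M eps' y.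
Proof.
  intros Heps Ht [x [Mx Hxy]]. exists x. split; [exact Mx|].
  exact (chain_mono eps eps' t t' x y Heps Ht Hxy).
Qed.

Lemma Pt_shift_back (M : X -> Prop) (eps t t' : R) (y : X) :
  (forall x, d x x = 0) -> (forall x a b, pi (pi x a) b = pi x (a + b)) ->
  0 <= eps -> 0 <= t' -> Pt X d pi (t + t') M eps y ->
  exists y', Pt X d pi t M eps y' /\ d (pi y' t') y <= eps.
Proof.
  intros Hdiag Hflow Heps Ht' [x [Mx Hxy]].
  destruct (chain_last_step eps (t + t') x y Hxy) as [z [s [Hz [Hts Hd]]]].
  exists (pi z (s - t')). split.
  - exists x. split; [exact Mx|].
    apply (chain_extend eps t (s - t') x z); [|lra|rewrite Hdiag; exact Heps].
    destruct Hz as [-> | Hxz]; [now left|].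
    right. exact (chain_mono eps eps (t + t') t x z (Rle_refl _) ltac:(lra) Hxz).
  - rewrite Hflow. replace (s - t' + t') with s by ring. exact Hd.
Qed.

End Chains.

Theorem lemma3p4 (X : Type) (d : X -> X -> R) (pi : X -> R -> X) (M : X -> Prop) :
  is_metric X d -> locally_compact X d -> is_flow X d pi ->
  forall y : X,
    (forall eps t, 0 < eps -> 0 < t -> Pt X d pi t M eps y) <->
    (forall eps t, 0 < eps -> 0 < t -> Aset X d pi M eps t y).
Proof.
  intros [_ [Hzero [Hsym _]]] _ [_ [Hflow _]] y.
  assert (Hdiag : forall x, d x x = 0) by (intros x; now apply Hzero).
  split.
  - intros HP eps t He Ht e Hee.
    set (eps' := Rmin eps (e / 2)).
    assert (Heps' : 0 < eps') by (apply Rmin_glb_lt; lra).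
    destruct (Pt_shift_back X d pi M eps' t t y Hdiag Hflow ltac:(lra) ltac:(lra)
                (HP eps' (t + t) Heps' ltac:(lra))) as [y' [Hy' Hd]].
    exists (pi y' t). split.
    + exists y', t. repeat split; [|lra].
      exact (Pt_mono X d pi M eps' eps t t y' (Rmin_l _ _) (Rle_refl _) Hy').
    + rewrite Hsym. assert (eps' <= e / 2) by apply Rmin_r. lra.
  - intros HA eps t He Ht.
    destruct (HA eps t He Ht eps He) as [z [[y' [s [Hy' [Hts ->]]]] Hd]].
    apply (Pt_extend X d pi M eps t s y' y Hy' Hts). rewrite Hsym. lra.
Qed.
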